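(* Let $\{(\mathcal{X}_j,\mathring{\mathcal{X}}_j,p_j)\}_{j\in\mathcal{I}}$ be $B$-$B$-bimodules with specified projections with reduced free product $(\mathcal{X},\mathring{\mathcal{X}},p)$ and let $i\in\mathcal{I}$. Then the map $\beta_i:\mathcal{L}(\mathcal{X}_i)\to\mathcal{L}(\mathcal{X})$, $\beta_i(a)=P_i\lambda_i(a)P_i$, is a homomorphism.
   Context: $B$ is a unital complex algebra. A $B$-$B$-bimodule with specified projection is a triple $(\mathcal{X},\mathring{\mathcal{X}},p)$ with $\mathcal{X}=B\oplus\mathring{\mathcal{X}}$ a direct sum of $B$-$B$-bimodules and $p(b\oplus\eta)=b$; $\mathcal{L}(\mathcal{X})$ is the algebra of linear operators on $\mathcal{X}$ respecting the bimodule structure. The reduced free product is $\mathcal{X}=B\oplus\mathring{\mathcal{X}}$ with $\mathring{\mathcal{X}}=\bigoplus_{n\ge1}\bigoplus_{i_1\ne\cdots\ne i_n}\mathring{\mathcal{X}}_{i_1}\otimes_B\cdots\otimes_B\mathring{\mathcal{X}}_{i_n}$ (consecutive indices distinct). For $i\in\mathcal{I}$, $\mathcal{X}(i)=B\oplus\bigoplus_{n\ge1}\bigoplus_{i_1\ne\cdots\ne i_n,\ i_1\ne i}\mathring{\mathcal{X}}_{i_1}\otimes_B\cdots\otimes_B\mathring{\mathcal{X}}_{i_n}$, $V_i:\mathcal{X}\to\mathcal{X}_i\otimes_B\mathcal{X}(i)$ is the natural bimodule isomorphism, $\lambda_i(a)=V_i^{-1}(a\otimes I)V_i$, and $P_i$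 is the projection of $\mathcal{X}$ onto the summand $B\oplus\mathring{\mathcal{X}}_i$, vanishing on the other direct summands. *)

From HB Require Import structures.
From mathcomp Require Import all_boot all_order all_algebra.
From mathcomp Require Import reals.
From mathcomp.real_closed Require Import complex.

Set Implicit Arguments.
Unset Strict Implicit.
Unset Printing Implicit Defensive.

Import GRing.Theory.
Local Open Scope ring_scope.

Section Bimodules.
Variable R : realType.
Local Notation C := (complex R).
Variable B : algType C.

Record bimod := Bimod {
  bm_car :> lmodType C;
  bm_l : B -> bm_car -> bm_car;
  bm_r : bm_car -> B -> bm_car;
  bm_lA : forall b b' x, bm_l (b * b') x = bm_l b (bm_l b' x);
  bm_l1 : forall x, bm_l 1 x = x;
  bm_lDl : forall b b' x, bm_l (b + b') x = bm_l b x + bm_l b' x;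
  bm_lDr : forall b x y, bm_l b (x + y) = bm_l b x + bm_l b y;
  bm_lZl : forall (c : C) b x, bm_l (c *: b) x = c *: bm_l b x;
  bm_lZr : forall (c : C) b x, bm_l b (c *: x) = c *: bm_l b x;
  bm_rA : forall x b b', bm_r x (b * b') = bm_r (bm_r x b) b';
  bm_r1 : forall x, bm_r x 1 = x;
  bm_rDl : forall x y b, bm_r (x + y) b = bm_r x b + bm_r y b;
  bm_rDr : forall x b b', bm_r x (b + b') = bm_r x b + bm_r x b';
  bm_rZl : forall (c : C) x b, bm_r (c *: x) b = c *: bm_r x b;
  bm_rZr : forall (c : C) x b, bm_r x (c *: b) = c *: bm_r x b;
  bm_lr : forall b x b', bm_l b (bm_r x b') = bm_r (bm_l b x) b'
}.

(* A bimodule with specified projection (X, Xo, p) is X = B (+) Xo, so it is *)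
(* given by the bimodule Xo; elements of X are pairs (b, xi), p = fst.       *)
Definition wp (M : bimod) : Type := (B * M)%type.

Definition wp_l (M : bimod) (b : B) (u : wp M) : wp M := (b * u.1, bm_l b u.2).
Definition wp_r (M : bimod) (u : wp M) (b : B) : wp M := (u.1 * b, bm_r u.2 b).
Definition wp_add (M : bimod) (u v : wp M) : wp M := (u.1 + v.1, u.2 + v.2).
Definition wp_scale (M : bimod) (c : C) (u : wp M) : wp M := (c *: u.1, c *: u.2).
Definition wp_zero (M : bimod) : wp M := (0, 0).
Definition wp_one (M : bimod) : wp M := (1, 0).

Definition isL (M : bimod) (T : wp M -> wp M) : Prop :=
  [/\ forall u v, T (wp_add u v) = wp_add (T u) (T v),
      forall c u, T (wp_scale c u) = wp_scale c (T u),
      forall b u, T (wp_l b u) = wp_l b (T u) &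
      forall b u, T (wp_r u b) = wp_r (T u) b].

End Bimodules.

(* An element of Xo = (+)_{i1 <> ... <> in} Xo_i1 (x)_B ... (x)_B Xo_in is    *)
(* represented by a finite formal sum (fsum) of pure tensors; a pure tensor   *)
(* xi_1 (x) ... (x) xi_n is represented by the word (list of letters)          *)
(* [:: (i1, xi_1); ...; (in, xi_n)].  An element of X = B (+) Xo is a pair    *)
(* (b, s).  The quotient is taken in setoid style: fp_rel is the congruence   *)
(* generated by the defining relations of the algebraic tensor product over B *)
(* (additivity in each slot, balancing x b (x) y = x (x) b y), together with  *)
(* killing the words that are not admissible (empty, or with two consecutive *)
(* equal indices, or - for X(i) - starting with the index i).  Since all the  *)
(* tensor relations preserve the index pattern of a word, the quotient is     *)
(* exactly the direct sum over admissible words of the tensor products.       *)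

Section FreeProduct.
Variable R : realType.
Local Notation C := (complex R).
Variable B : algType C.
Variable I : eqType.
Variable Xo : I -> bimod B.

Definition letter := {j : I & Xo j}.
Definition mkl (j : I) (x : Xo j) : letter := existT (fun k => Xo k : Type) j x.
Definition word := seq letter.
Definition fsum := seq word.

Definition map_first (f : forall j, Xo j -> Xo j) (w : word) : word :=
  match w with
  | [::] => [::]
  | l :: r => mkl (f (projT1 l) (projT2 l)) :: r
  end.

Fixpoint ract_last (w : word) (b : B) : word :=
  match w with
  | [::] => [::]
  | [:: l] => [:: mkl (bm_r (projT2 l) b)]
  | l :: r => l :: ract_last r b
  end.

Inductive fp_rel (kill : pred I) : fsum -> fsum -> Prop :=
| fr_refl s : fp_rel kill s s
| fr_sym s t : fp_rel kill s t -> fp_rel kill t s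
| fr_trans s t u : fp_rel kill s t -> fp_rel kill t u -> fp_rel kill s u
| fr_cat s s' t t' :
    fp_rel kill s s' -> fp_rel kill t t' -> fp_rel kill (s ++ t) (s' ++ t')
| fr_comm s t : fp_rel kill (s ++ t) (t ++ s)
| fr_add (u v : word) (j : I) (x y : Xo j) :
    fp_rel kill [:: u ++ mkl (x + y) :: v]
                [:: u ++ mkl x :: v; u ++ mkl y :: v]
| fr_zero (u v : word) (j : I) :
    fp_rel kill [:: u ++ mkl (0 : Xo j) :: v] [::]
| fr_bal (u v : word) (j k : I) (x : Xo j) (y : Xo k) (b : B) :
    fp_rel kill [:: u ++ mkl (bm_r x b) :: mkl y :: v]
                [:: u ++ mkl x :: mkl (bm_l b y) :: v]
| fr_nil : fp_rel kill [:: [::]] [::]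
| fr_rep (u v : word) (j : I) (x y : Xo j) :
    fp_rel kill [:: u ++ mkl x :: mkl y :: v] [::]
| fr_kill (v : word) (j : I) (x : Xo j) :
    kill j -> fp_rel kill [:: mkl x :: v] [::].

Definition Xrep := (B * fsum)%type.

(* equality in X(kill): kill = pred0 gives X, kill = pred1 i gives X(i) *)
Definition Xeqv (kill : pred I) (u v : Xrep) : Prop :=
  u.1 = v.1 /\ fp_rel kill u.2 v.2.

Definition Xeq := Xeqv pred0.

Definition Xzero : Xrep := (0, [::]).
Definition Xadd (u v : Xrep) : Xrep := (u.1 + v.1, u.2 ++ v.2).
Definition Xscale (c : C) (u : Xrep) : Xrep :=
  (c *: u.1, map (map_first (fun j x => c *: x)) u.2).
Definition Xl (b : B) (u : Xrep) : Xrep :=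
  (b * u.1, map (map_first (fun j x => bm_l b x)) u.2).
Definition Xr (u : Xrep) (b : B) : Xrep :=
  (u.1 * b, map (fun w => ract_last w b) u.2).

Definition isLX (T : Xrep -> Xrep) : Prop :=
  [/\ forall u v, Xeq u v -> Xeq (T u) (T v),
      forall u v, Xeq (T (Xadd u v)) (Xadd (T u) (T v)),
      forall c u, Xeq (T (Xscale c u)) (Xscale c (T u)),
      forall b u, Xeq (T (Xl b u)) (Xl b (T u)) &
      forall b u, Xeq (T (Xr u b)) (Xr (T u) b)].

Variable i : I.

(* X_i (x)_B X(i): formal sums of pure tensors xi (x) eta, xi in X_i, eta a  *)
(* representative of an element of X(i).                                     *)
Definition Trep := seq (wp (Xo i) * Xrep)%type.

Definition letter_i (l : letter) : Xo i := tagged_as (mkl (0 : Xo i)) l.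

(* the natural isomorphism V_i : X -> X_i (x)_B X(i) *)
Definition V_word (w : word) : Trep :=
  match w with
  | [::] => [::]
  | l :: r =>
      if projT1 l == i then
        [:: ((0, letter_i l), if r is [::] then ((1 : B), [::]) else (0, [:: r]))]
      else [:: (wp_one (Xo i), (0, [:: w]))]
  end.

Definition V (u : Xrep) : Trep :=
  (wp_one (Xo i), (u.1, [::])) :: flatten (map V_word u.2).

(* its inverse V_i^{-1} : X_i (x)_B X(i) -> X,                               *)
(*   (c, x) (x) (b, s)  |->  c.(b, s) + x b + sum_{w in s} x (x) w            *)
Definition Vinv1 (t : wp (Xo i) * Xrep) : Xrep :=
  Xadd (Xl t.1.1 t.2)
       (0, [:: mkl (bm_r t.1.2 t.2.1)] :: map (cons (mkl t.1.2)) t.2.2).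

Definition Vinv (t : Trep) : Xrep := foldr Xadd Xzero (map Vinv1 t).

Definition tensI (a : wp (Xo i) -> wp (Xo i)) (t : Trep) : Trep :=
  map (fun p => (a p.1, p.2)) t.

Definition lambda (a : wp (Xo i) -> wp (Xo i)) (u : Xrep) : Xrep :=
  Vinv (tensI a (V u)).

Definition single_i (w : word) : bool :=
  if w is [:: l] then projT1 l == i else false.

Definition Pi (u : Xrep) : Xrep := (u.1, filter single_i u.2).

Definition beta (a : wp (Xo i) -> wp (Xo i)) (u : Xrep) : Xrep :=
  Pi (lambda a (Pi u)).

End FreeProduct.

Arguments beta {R B I Xo} i a u.
Arguments lambda {R B I Xo} i a u.
Arguments Pi {R B I Xo} i u.
Arguments V {R B I Xo} i u.
Arguments Vinv {R B I Xo} i t.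

From HB Require Import structures.
From mathcomp Require Import all_boot all_order all_algebra.
From mathcomp Require Import reals.
From mathcomp.real_closed Require Import complex.

(* The range of P_i is a copy of X_i = B (+) Xo_i: a representative whose
   words are all single letters of index i is determined, up to equality in X,
   by its B-part and the sum of its letters (the map [to_Xi]).  On such a vector
   lambda_i(a) acts as a, because V_i sends b (+) xi to (1, 0) (x) b plus
   (0, xi) (x) 1.  Hence to_Xi (beta_i(a) u) = a (to_Xi u), and linearity,
   multiplicativity and compatibility with the bimodule structure are all
   transported from L(X_i) to beta_i. *)

Set Implicit Arguments.
Unset Strict Implicit.
Unset Printing Implicit Defensive.

Import GRing.Theory.
Local Open Scope ring_scope.

Section BimoduleFacts.
Variable R : realType.
Variable B : algType (complex R).

Lemma bm_l0 (M : bimod B) (b : B) : bm_l b (0 : M) = 0.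
Proof. by rewrite -(scale0r (0 : M)) bm_lZr !scale0r. Qed.

Lemma bm_r0 (M : bimod B) (b : B) : bm_r (0 : M) b = 0.
Proof. by rewrite -(scale0r (0 : M)) bm_rZl !scale0r. Qed.

Variable M : bimod B.
Implicit Types f g : wp M -> wp M.

Lemma isL_wp_zero f : isL f -> f (wp_zero M) = wp_zero M.
Proof.
case=> _ fZ _ _; have := fZ 0 (wp_zero M).
by rewrite /wp_scale /wp_zero /= !scale0r.
Qed.

Lemma isL_comp f g : isL f -> isL g -> isL (fun v => f (g v)).
Proof.
by case=> fD fZ fL fR [gD gZ gL gR]; split=> *;
  rewrite (gD, gZ, gL, gR) (fD, fZ, fL, fR).
Qed.

Lemma isL_add f g : isL f -> isL g -> isL (fun v => wp_add (f v) (g v)).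
Proof.
case=> fD fZ fL fR [gD gZ gL gR]; split=> [u v|c u|b u|b u].
- rewrite fD gD /wp_add /=.
  by congr pair; apply: addrACA.
- rewrite fZ gZ /wp_add /wp_scale /=.
  by congr pair; rewrite scalerDr.
- rewrite fL gL /wp_add /wp_l /=.
  by congr pair; rewrite (mulrDr, bm_lDr).
- rewrite fR gR /wp_add /wp_r /=.
  by congr pair; rewrite (mulrDl, bm_rDl).
Qed.

Lemma isL_scale (c : complex R) f : isL f -> isL (fun v => wp_scale c (f v)).
Proof.
case=> fD fZ fL fR; split=> [u v|c' u|b u|b u].
- by rewrite fD /wp_add /wp_scale /=; congr pair; rewrite scalerDr.
- by rewrite fZ /wp_scale /=; congr pair; rewrite !scalerA mulrC.
- by rewrite fL /wp_scale /wp_l /=; congr pair; rewrite (scalerAr, bm_lZr).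
- by rewrite fR /wp_scale /wp_r /=; congr pair; rewrite (scalerAl, bm_rZl).
Qed.

End BimoduleFacts.

Section SummandXi.
Variable R : realType.
Variable B : algType (complex R).
Variable I : eqType.
Variable Xo : I -> bimod B.
Variable i : I.
Implicit Types (u v : Xrep Xo) (s : fsum Xo) (w : word Xo) (b : B) (c : complex R).

Lemma letter_i_mkl (x : Xo i) : letter_i i (mkl x) = x.
Proof. by rewrite /letter_i /tagged_as /=; case: eqP => // e; rewrite [e]eq_axiomK. Qed.

Lemma single_i_cat w w' (l : letter Xo) :
  single_i i (w ++ l :: w') = [&& nilp w, nilp w' & projT1 l == i].
Proof. by case: w => [|? [|? ?]]; case: w'. Qed.

Lemma single_i_map_first (g : forall j, Xo j -> Xo j) w :
  single_i i (map_first g w) = single_i i w.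
Proof. by case: w => [|? [|? ?]]. Qed.

Lemma single_i_ract_last w b : single_i i (ract_last w b) = single_i i w.
Proof. by case: w => [|? [|? [|? ?]]]. Qed.

Definition head_i w : Xo i := if w is l :: _ then letter_i i l else 0.

(* The Xo_i-component of a formal sum: words that are not a single letter of
   index i lie in the other direct summands. *)
Definition fsum_i s : Xo i := \sum_(w <- s | single_i i w) head_i w.

Definition to_Xi u : wp (Xo i) := (u.1, fsum_i u.2).

Definition in_Xi u : bool := all (single_i i) u.2.

Lemma fsum_i_nil : fsum_i [::] = 0.
Proof. exact: big_nil. Qed.

Lemma fsum_i_cons w s :
  fsum_i (w :: s) = (if single_i i w then head_i w else 0) + fsum_i s.
Proof. by rewrite /fsum_i big_cons; case: ifP; rewrite ?add0r. Qed.

Lemma fsum_i_cat s s' : fsum_i (s ++ s') = fsum_i s + fsum_i s'.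
Proof. exact: big_cat. Qed.

Lemma fsum_i_letter (x : Xo i) : fsum_i [:: [:: mkl x]] = x.
Proof. by rewrite fsum_i_cons fsum_i_nil /= eqxx letter_i_mkl addr0. Qed.

Lemma fsum_i_fp_rel s s' : fp_rel pred0 s s' -> fsum_i s = fsum_i s'.
Proof.
(* [//] also discharges the [fr_kill] case: nothing is killed in X. *)
elim=> {s s'} //.
- by move=> s s' s'' _ -> _ ->.
- by move=> s s' t t' _ E _ E'; rewrite !fsum_i_cat E E'.
- by move=> s t; rewrite !fsum_i_cat addrC.
- move=> u v j x y; rewrite !fsum_i_cons fsum_i_nil !single_i_cat.
  case: u v => [|? ?] [|? ?] /=; rewrite ?addr0 //.
  by case: eqP => [ji|]; [subst j; rewrite !letter_i_mkl | rewrite addr0].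
- move=> u v j; rewrite !fsum_i_cons fsum_i_nil !single_i_cat.
  case: u v => [|? ?] [|? ?] /=; rewrite ?addr0 //.
  by case: eqP => // ji; subst j; rewrite letter_i_mkl.
- by move=> *; rewrite !fsum_i_cons fsum_i_nil !single_i_cat /= andbF.
- by rewrite fsum_i_cons fsum_i_nil addr0.
- by move=> *; rewrite !fsum_i_cons fsum_i_nil !single_i_cat /nilp /= andbF addr0.
Qed.

Lemma fsum_i_filter s : fsum_i (filter (single_i i) s) = fsum_i s.
Proof. by rewrite /fsum_i big_filter_cond; apply: eq_bigl => w; rewrite andbb. Qed.

Lemma fsum_i_map_first (g : forall j, Xo j -> Xo j) s :
  g i 0 = 0 -> {morph g i : x y / x + y} ->
  fsum_i (map (map_first g) s) = g i (fsum_i s).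
Proof.
move=> g0 gD; elim: s => [|w s IH] /=; first by rewrite !fsum_i_nil g0.
rewrite !fsum_i_cons IH gD single_i_map_first; congr (_ + _).
case: w => [|[j x] [|? ?]] //=; rewrite ?g0 //.
by case: eqP => [e|]; [subst j; rewrite !letter_i_mkl | rewrite g0].
Qed.

Lemma fsum_i_ract_last s b :
  fsum_i (map (fun w => ract_last w b) s) = bm_r (fsum_i s) b.
Proof.
elim: s => [|w s IH] /=; first by rewrite !fsum_i_nil bm_r0.
rewrite !fsum_i_cons IH bm_rDl single_i_ract_last; congr (_ + _).
case: w => [|[j x] [|? [|? ?]]] //=; rewrite ?bm_r0 //.
by case: eqP => [e|]; [subst j; rewrite !letter_i_mkl | rewrite bm_r0].
Qed.

Lemma fp_rel_fsum_i s :
  all (single_i i) s -> fp_rel pred0 s [:: [:: mkl (fsum_i s)]].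
Proof.
elim: s => [_|w s IH] /=.
  by rewrite fsum_i_nil; apply/fr_sym/(fr_zero _ [::] [::] i).
case: w => [|[j x] [|? ?]] //= /andP[/eqP/= ji hs]; subst j.
rewrite fsum_i_cons /= eqxx letter_i_mkl.
apply: fr_trans (fr_cat (fr_refl _ [:: [:: mkl x]]) (IH hs)) _.
exact/fr_sym/(fr_add _ [::] [::] x (fsum_i s)).
Qed.

Lemma to_Xi_Xeq u v : Xeq u v -> to_Xi u = to_Xi v.
Proof. by case=> e1 e2; rewrite /to_Xi e1 (fsum_i_fp_rel e2). Qed.

Lemma Xeq_to_Xi u v : in_Xi u -> in_Xi v -> to_Xi u = to_Xi v -> Xeq u v.
Proof.
move=> hu hv [e1 e2]; split=> //.
by apply: fr_trans (fp_rel_fsum_i hu) _; rewrite e2; apply/fr_sym/fp_rel_fsum_i.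
Qed.

Lemma to_Xi_Xadd u v : to_Xi (Xadd u v) = wp_add (to_Xi u) (to_Xi v).
Proof. by rewrite /to_Xi /= fsum_i_cat. Qed.

Lemma to_Xi_Xscale c u : to_Xi (Xscale c u) = wp_scale c (to_Xi u).
Proof. by rewrite /to_Xi /= fsum_i_map_first ?scaler0 // => x y; rewrite scalerDr. Qed.

Lemma to_Xi_Xl b u : to_Xi (Xl b u) = wp_l b (to_Xi u).
Proof. by rewrite /to_Xi /= fsum_i_map_first ?bm_l0 // => x y; rewrite bm_lDr. Qed.

Lemma to_Xi_Xr u b : to_Xi (Xr u b) = wp_r (to_Xi u) b.
Proof. by rewrite /to_Xi /= fsum_i_ract_last. Qed.

Lemma to_Xi_Pi u : to_Xi (Pi i u) = to_Xi u.
Proof. by rewrite /to_Xi /= fsum_i_filter. Qed.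

Lemma in_Xi_Pi u : in_Xi (Pi i u).
Proof. exact: filter_all. Qed.

Lemma in_Xi_Xadd u v : in_Xi u -> in_Xi v -> in_Xi (Xadd u v).
Proof. by rewrite /in_Xi all_cat => -> ->. Qed.

Lemma in_Xi_Xscale c u : in_Xi u -> in_Xi (Xscale c u).
Proof. by rewrite /in_Xi all_map; apply: sub_all => w; rewrite /= single_i_map_first. Qed.

Lemma in_Xi_Xl b u : in_Xi u -> in_Xi (Xl b u).
Proof. by rewrite /in_Xi all_map; apply: sub_all => w; rewrite /= single_i_map_first. Qed.

Lemma in_Xi_Xr u b : in_Xi u -> in_Xi (Xr u b).
Proof. by rewrite /in_Xi all_map; apply: sub_all => w; rewrite /= single_i_ract_last. Qed.

Lemma in_Xi_beta a u : in_Xi (beta i a u).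
Proof. exact: in_Xi_Pi. Qed.

Lemma to_Xi_Vinv1 (p : wp (Xo i)) (b : B) :
  to_Xi (Vinv1 (p, (b, [::]))) = wp_r p b.
Proof. by rewrite /to_Xi /Vinv1 /= fsum_i_letter addr0. Qed.

Section LambdaOnXi.
Variable a : wp (Xo i) -> wp (Xo i).
Hypothesis aL : isL a.

Lemma Vinv_tensI_cons p t :
  Vinv i (tensI a (p :: t)) = Xadd (Vinv1 (a p.1, p.2)) (Vinv i (tensI a t)).
Proof. by []. Qed.

Lemma to_Xi_lambda_letters s : all (single_i i) s ->
  to_Xi (Vinv i (tensI a (flatten (map (V_word i) s)))) = a (0, fsum_i s).
Proof.
have [aD _ _ aR] := aL; elim: s => [_|w s IH] /=.
  by rewrite /to_Xi /= fsum_i_nil -[(0, 0)]/(wp_zero _) isL_wp_zero.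
case: w => [|[j x] [|? ?]] //= /andP[/eqP/= ji hs]; subst j.
rewrite eqxx Vinv_tensI_cons to_Xi_Xadd to_Xi_Vinv1 IH // fsum_i_cons /= eqxx.
rewrite (letter_i_mkl x) -aR -aD /wp_r /wp_add /=.
by rewrite mul0r addr0 bm_r1.
Qed.

Lemma to_Xi_beta u : to_Xi (beta i a u) = a (to_Xi u).
Proof.
have [aD _ _ aR] := aL.
rewrite /beta to_Xi_Pi /lambda /V Vinv_tensI_cons to_Xi_Xadd to_Xi_Vinv1.
rewrite to_Xi_lambda_letters ?filter_all //= -aR -aD /wp_r /wp_add /wp_one /=.
by rewrite mul1r bm_r0 addr0 add0r fsum_i_filter.
Qed.

Lemma beta_isLX : isLX (beta i a).
Proof.
have [aD aZ aLl aR] := aL.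
split=> [u v /to_Xi_Xeq e|u v|c u|b u|b u]; apply: Xeq_to_Xi;
  rewrite ?(in_Xi_beta, in_Xi_Xadd, in_Xi_Xscale, in_Xi_Xl, in_Xi_Xr) //.
- by rewrite !to_Xi_beta e.
- by rewrite to_Xi_Xadd !to_Xi_beta to_Xi_Xadd aD.
- by rewrite to_Xi_Xscale !to_Xi_beta to_Xi_Xscale aZ.
- by rewrite to_Xi_Xl !to_Xi_beta to_Xi_Xl aLl.
- by rewrite to_Xi_Xr !to_Xi_beta to_Xi_Xr aR.
Qed.

End LambdaOnXi.

End SummandXi.

Theorem corollary2p3 (R : realType) (B : algType (complex R)) (I : eqType)
    (Xo : I -> bimod B) (i : I) :
  forall a a' : wp (Xo i) -> wp (Xo i), isL a -> isL a' ->
    [/\ isLX (beta i a),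
        forall u, Xeq (beta i (fun v => a (a' v)) u) (beta i a (beta i a' u)),
        forall u, Xeq (beta i (fun v => wp_add (a v) (a' v)) u)
                      (Xadd (beta i a u) (beta i a' u)) &
        forall (c : complex R) u,
          Xeq (beta i (fun v => wp_scale c (a v)) u) (Xscale c (beta i a u))].
Proof.
move=> a a' La La'; split=> [|u|u|c u]; first exact: beta_isLX.
all: apply: (Xeq_to_Xi (i := i)); rewrite ?(in_Xi_beta, in_Xi_Xadd, in_Xi_Xscale) //.
- by rewrite !(to_Xi_beta (isL_comp La La'), to_Xi_beta La, to_Xi_beta La').
- by rewrite to_Xi_Xadd !(to_Xi_beta (isL_add La La'), to_Xi_beta La, to_Xi_beta La').
- by rewrite to_Xi_Xscale !(to_Xi_beta (isL_scale c La), to_Xi_beta La).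
Qed.
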